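(* Let $G$ be a 5-vertex-critical $(P_5,\text{chair})$-free graph and let $C=v_1v_2v_3v_4v_5v_1$ be an induced $C_5$ in $G$. Then for every $1\le i\le 5$, every vertex of $V(G)\setminus(S^2_3(i)\cup S_4(i)\cup S_5)$ is either complete or anticomplete to $S^2_3(i)$.
   Context: All graphs are finite and simple; $P_5$ is the path on 5 vertices; the chair is a $P_4$ plus a vertex adjacent to exactly one of the two middle vertices of the $P_4$; ''$H$-free'' means no induced subgraph isomorphic to $H$; $G$ is $k$-vertex-critical if $\chi(G)=k$ and $\chi(G-v)<k$ for all $v$. Indices modulo 5; for $v\notin V(C)$ let $N_C(v)=N(v)\cap V(C)$. $S^2_3(i)=\{v\notin V(C): N_C(v)=\{v_{i-2},v_i,v_{i+2}\}\}$, $S_4(i)=\{v\notin V(C): N_C(v)=\{v_{i-2},v_{i-1},v_{i+1},v_{i+2}\}\}$, $S_5=\{v\notin V(C): N_C(v)=V(C)\}$. Complete/anticomplete: adjacent/nonadjacent to every vertex of the set. *)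

From mathcomp Require Import all_boot all_order.
Set Implicit Arguments. Unset Strict Implicit. Unset Printing Implicit Defensive.

Section Graphs.
Variable T : finType.
Variable e : rel T.

Definition simple_graph : Prop := symmetric e /\ irreflexive e.

Definition colorable_on (S : {set T}) (k : nat) : Prop :=
  exists c : T -> nat,
    (forall x, x \in S -> c x < k) /\
    (forall x y, x \in S -> y \in S -> e x y -> c x != c y).

Definition chromatic_number_is (S : {set T}) (k : nat) : Prop :=
  colorable_on S k /\ forall j, j < k -> ~ colorable_on S j.

Definition vertex_critical (k : nat) : Prop :=
  chromatic_number_is [set: T] k /\
  forall v : T, exists2 j, j < k & chromatic_number_is (setT :\ v) j.

Definition induced_copy (H : finType) (h : rel H) : Prop :=
  exists f : H -> T, injective f /\ forall a b, h a b = e (f a) (f b).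

Definition H_free (H : finType) (h : rel H) : Prop := ~ induced_copy h.
End Graphs.

Definition P5 : rel 'I_5 := fun i j => (i.+1 == j :> nat) || (j.+1 == i :> nat).

(* chair on 'I_5 : path 0-1-2-3 plus vertex 4 adjacent to 1 only *)
Definition chair : rel 'I_5 := fun i j =>
  [|| (i.+1 == j :> nat) && (j <= 3), (j.+1 == i :> nat) && (i <= 3),
      (i == 4 :> nat) && (j == 1 :> nat) | (i == 1 :> nat) && (j == 4 :> nat)].

Definition shift (i : 'I_5) (k : nat) : nat := (i + k) %% 5.

Section C5.
Variable T : finType.
Variable e : rel T.
Variable v : 'I_5 -> T.

Definition induced_C5 : Prop :=
  injective v /\
  forall i j : 'I_5, e (v i) (v j) = (j == shift i 1 :> nat) || (i == shift j 1 :> nat).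

Definition inC (x : T) : bool := [exists j, v j == x].

Definition NC_is (x : T) (P : 'I_5 -> bool) : bool :=
  ~~ inC x && [forall j, e x (v j) == P j].

(* S^2_3(i): N_C(x) = {v_{i-2}, v_i, v_{i+2}} *)
Definition S23 (i : 'I_5) (x : T) : bool :=
  NC_is x (fun j => [|| j == shift i 3 :> nat, j == i :> nat | j == shift i 2 :> nat]).

(* S_4(i): N_C(x) = {v_{i-2}, v_{i-1}, v_{i+1}, v_{i+2}} *)
Definition S4 (i : 'I_5) (x : T) : bool :=
  NC_is x (fun j => [|| j == shift i 3 :> nat, j == shift i 4 :> nat,
                        j == shift i 1 :> nat | j == shift i 2 :> nat]).

Definition S5 (x : T) : bool := NC_is x (fun _ => true).
End C5.

From mathcomp Require Import all_boot all_order.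
Set Implicit Arguments. Unset Strict Implicit. Unset Printing Implicit Defensive.

(* Suppose x has a neighbour y1 and a non-neighbour y2 in
   S^2_3(i).  Relabel the cycle from v_i, i.e. write w_a = v_(i+a mod 5).
   Then y1 and y2 are both adjacent exactly to w_0, w_2, w_3 on C, x lies
   outside C, and by hypothesis N_C(x) is not the neighbourhood pattern of
   S^2_3(i), S_4(i) or S_5.  Hence the eight vertices w_0..w_4, y1, y2, x
   induce a graph [config b yy] that depends only on the five bits b
   describing N_C(x) and on the bit yy = [y1 ~ y2].  A backtracking search,
   run by computation over all 64 choices, finds an induced P5 or chair in
   every admissible configuration; it lifts to G, contradicting
   (P5, chair)-freeness.  Vertices of the small
   graphs are plain numbers so that the finite check evaluates by [vm_compute]. *)

Section NatCopies.
Variables (T : finType) (e : rel T) (k n : nat) (g h : nat -> nat -> bool).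

Definition copy_at (s : seq nat) : bool :=
  [&& size s == k, uniq s, all (fun a => a < n) s &
    all (fun p => all (fun q => h p q == g (nth 0 s p) (nth 0 s q)) (iota 0 k)) (iota 0 k)].

Fixpoint extensions (l : nat) (s : seq nat) : seq (seq nat) :=
  if l is l'.+1 then
    let fits a := (a \notin s) &&
      all (fun p => h p (size s) == g (nth 0 s p) a) (iota 0 (size s)) in
    flatten [seq extensions l' (rcons s a) | a <- iota 0 n & fits a]
  else [:: s].

(* A computable test for an induced copy of h in g; every candidate produced
   by the search is re-validated by [copy_at]. *)
Definition find_copy : bool := has copy_at (extensions k [::]).

Lemma find_copy_lift (W : nat -> T) :
  {in [pred a | a < n] &, injective W} ->
  (forall a c, a < n -> c < n -> g a c = e (W a) (W c)) ->
  find_copy -> induced_copy e (fun p q : 'I_k => h p q).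
Proof.
move=> injW eW /hasP [s _ /and4P [/eqP size_s uniq_s /allP s_lt /allP adj]].
have nth_lt (p : 'I_k) : nth 0 s p < n by apply: s_lt; rewrite mem_nth ?size_s.
exists (fun p : 'I_k => W (nth 0 s p)); split.
- move=> p q /(injW _ _ (nth_lt p) (nth_lt q)) /eqP.
  by rewrite nth_uniq ?size_s // => /eqP /val_inj.
- move=> p q; rewrite -eW //; apply/eqP.
  have p_in : nat_of_ord p \in iota 0 k by rewrite mem_iota /=.
  by move/allP: (adj p p_in); apply; rewrite mem_iota /=.
Qed.
End NatCopies.

Section Glue.
Variables (n m : nat) (gC N gU : nat -> nat -> bool).

(* The graph on {0..n+m-1} whose first n vertices induce gC, whose last m
   vertices induce gU (reindexed from 0), and where the t-th outer vertex is
   adjacent to the p-th inner one iff [N t p]. *)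
Definition glue (a c : nat) : bool :=
  if a < n then (if c < n then gC a c else N (c - n) a)
  else if c < n then N (a - n) c else gU (a - n) (c - n).

Variables (T : finType) (e : rel T) (w u : nat -> T).
Hypothesis sym : symmetric e.
Hypothesis injw : {in [pred p | p < n] &, injective w}.
Hypothesis inju : {in [pred t | t < m] &, injective u}.
Hypothesis wu_disjoint : forall p t, p < n -> t < m -> w p != u t.
Hypothesis eC : forall p q, p < n -> q < n -> e (w p) (w q) = gC p q.
Hypothesis eN : forall t p, t < m -> p < n -> e (u t) (w p) = N t p.
Hypothesis eU : forall s t, s < m -> t < m -> e (u s) (u t) = gU s t.

Definition glue_map (a : nat) : T := if a < n then w a else u (a - n).

Lemma outer_index a : n <= a -> a < n + m -> a - n < m.
Proof. by move=> n_le_a; rewrite ltn_subLR. Qed.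

Lemma glue_map_inj : {in [pred a | a < n + m] &, injective glue_map}.
Proof.
move=> a c; rewrite !inE /glue_map => a_lt c_lt.
case: ltnP => [a_n | n_a]; case: ltnP => [c_n | n_c] E.
- exact: injw.
- by move: (wu_disjoint a_n (outer_index n_c c_lt)); rewrite E eqxx.
- by move: (wu_disjoint c_n (outer_index n_a a_lt)); rewrite E eqxx.
- move: (inju (outer_index n_a a_lt) (outer_index n_c c_lt) E).
  by move/(congr1 (addn^~ n)); rewrite !subnK.
Qed.

Lemma glue_mapE a c : a < n + m -> c < n + m -> glue a c = e (glue_map a) (glue_map c).
Proof.
rewrite /glue /glue_map => a_lt c_lt.
case: ltnP => [a_n | n_a]; case: ltnP => [c_n | n_c].
- by rewrite eC.
- by rewrite sym eN ?outer_index.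
- by rewrite eN ?outer_index.
- by rewrite eU ?outer_index.
Qed.
End Glue.

Section Rotation.
Variables (T : finType) (e : rel T) (v : 'I_5 -> T) (i : 'I_5).

Definition rot (a : nat) : 'I_5 := inord (shift i a).

Lemma rotE a : rot a = shift i a :> nat.
Proof. by rewrite inordK // ltn_pmod. Qed.

Lemma shift_eq a c : (shift i a == shift i c) = (a == c %[mod 5]).
Proof. exact: eqn_modDl. Qed.

Lemma shift_eq0 a : (shift i a == i) = (a == 0 %[mod 5]).
Proof. by rewrite -shift_eq /shift addn0 [i %% 5]modn_small. Qed.

Lemma shift_rot a s : shift (rot a) s = shift i (a + s).
Proof. by rewrite /shift rotE /shift modnDml addnA. Qed.

Lemma rot_surj (j : 'I_5) : exists2 a, a < 5 & j = rot a.
Proof.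
exists ((j + (5 - i)) %% 5); first by rewrite ltn_pmod.
apply: ord_inj; rewrite rotE /shift modnDmr addnCA subnKC; last exact: ltnW.
by rewrite modnDr modn_small.
Qed.

Lemma NC_is_rot (x : T) (P : 'I_5 -> bool) :
  NC_is e v x P = ~~ inC v x && all (fun a => e x (v (rot a)) == P (rot a)) (iota 0 5).
Proof.
congr (_ && _); apply/forallP/allP => [H a _ | H j]; first exact: H.
by have [a a_lt ->] := rot_surj j; apply: H; rewrite mem_iota.
Qed.

Definition cyc5 (a c : nat) : bool := (c == a + 1 %[mod 5]) || (a == c + 1 %[mod 5]).
Definition S23_nbr (a : nat) : bool := [|| a == 3, a == 0 | a == 2].
Definition S4_nbr (a : nat) : bool := [|| a == 3, a == 4, a == 1 | a == 2].

Lemma rot_cycle : induced_C5 e v -> forall a c, e (v (rot a)) (v (rot c)) = cyc5 a c.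
Proof. by case=> _ hC a c; rewrite hC !shift_rot !rotE !shift_eq. Qed.

Lemma rot_inj : injective v -> {in [pred a | a < 5] &, injective (fun a => v (rot a))}.
Proof.
move=> injv a c; rewrite !inE => a_lt c_lt /injv /(congr1 (@nat_of_ord 5)) /eqP.
by rewrite !rotE shift_eq !modn_small // => /eqP.
Qed.

Lemma S23_rot (y : T) :
  S23 e v i y = ~~ inC v y && all (fun a => e y (v (rot a)) == S23_nbr a) (iota 0 5).
Proof.
rewrite /S23 NC_is_rot; congr (_ && _); apply: eq_in_all => a; rewrite mem_iota => a_lt.
by rewrite rotE shift_eq0 !shift_eq !modn_small.
Qed.

Lemma S4_rot (y : T) :
  S4 e v i y = ~~ inC v y && all (fun a => e y (v (rot a)) == S4_nbr a) (iota 0 5).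
Proof.
rewrite /S4 NC_is_rot; congr (_ && _); apply: eq_in_all => a; rewrite mem_iota => a_lt.
by rewrite rotE !shift_eq !modn_small.
Qed.

Lemma S5_rot (y : T) : S5 e v y = ~~ inC v y && all (fun a => e y (v (rot a))) (iota 0 5).
Proof.
by rewrite /S5 NC_is_rot; congr (_ && _); apply: eq_all => a; rewrite eqb_id.
Qed.
Lemma outside_C (y : T) : ~~ inC v y -> forall j, v j != y.
Proof. by move=> yC j; apply: contraNneq yC => <-; apply/existsP; exists j. Qed.
End Rotation.

(* P5 and the chair on indices {0..4}; P5 and chair of the definitions are
   these relations on ordinal values, so copies of them are copies of P5 and
   of the chair. *)
Definition P5_nat (p q : nat) : bool := (p.+1 == q) || (q.+1 == p).
Definition chair_nat (p q : nat) : bool :=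
  [|| (p.+1 == q) && (q <= 3), (q.+1 == p) && (p <= 3),
      (p == 4) && (q == 1) | (p == 1) && (q == 4)].

(* The three vertices outside C are numbered y1 = 0, y2 = 1, x = 2, with
   y1 ~ x, y2 !~ x and yy = [y1 ~ y2]; the bit list b is N_C(x). *)
Definition outer_adj (yy : bool) (s t : nat) : bool :=
  match s, t with
  | 0, 1 | 1, 0 => yy
  | 0, 2 | 2, 0 => true
  | _, _ => false
  end.

Definition outer_nbr (b : seq bool) (t p : nat) : bool :=
  if t == 2 then nth false b p else S23_nbr p.

(* The graph induced by v_i, ..., v_(i+4), y1, y2, x. *)
Definition config (b : seq bool) (yy : bool) : nat -> nat -> bool :=
  glue 5 cyc5 (outer_nbr b) (outer_adj yy).

Definition admissible (b : seq bool) : bool :=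
  [&& ~~ all (fun a => nth false b a == S23_nbr a) (iota 0 5),
      ~~ all (fun a => nth false b a == S4_nbr a) (iota 0 5)
    & ~~ all (nth false b) (iota 0 5)].

Definition has_P5_or_chair (b : seq bool) (yy : bool) : bool :=
  find_copy 5 8 (config b yy) P5_nat || find_copy 5 8 (config b yy) chair_nat.

Fixpoint bitseqs (l : nat) : seq (seq bool) :=
  if l is l'.+1 then [seq c :: t | c <- [:: true; false], t <- bitseqs l'] else [:: [::]].

Lemma bitseqs_complete (b : seq bool) : b \in bitseqs (size b).
Proof.
elim: b => [|c b IHb] //=.
by case: c; rewrite !mem_cat (map_f _ IHb) ?orbT.
Qed.

Lemma config_check :
  all (fun b => all (fun yy => admissible b ==> has_P5_or_chair b yy) [:: true; false])
      (bitseqs 5).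
Proof. by vm_compute. Qed.

Lemma config_has_P5_or_chair (b : seq bool) (yy : bool) :
  size b = 5 -> admissible b -> has_P5_or_chair b yy.
Proof.
move=> size_b; have := bitseqs_complete b; rewrite size_b => b_in.
have yy_in : yy \in [:: true; false] by case: yy.
by move/allP/(_ b b_in)/allP/(_ yy yy_in)/implyP: config_check.
Qed.

Section MixedPair.
Variables (T : finType) (e : rel T) (v : 'I_5 -> T) (i : 'I_5) (x y1 y2 : T).
Hypotheses (sym : symmetric e) (irr : irreflexive e) (C5 : induced_C5 e v).
Hypotheses (Sy1 : S23 e v i y1) (Sy2 : S23 e v i y2).
Hypotheses (xy1 : e x y1) (xy2 : ~~ e x y2).
Hypotheses (n23 : ~~ S23 e v i x) (n4 : ~~ S4 e v i x) (n5 : ~~ S5 e v x).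

Let w (a : nat) : T := v (rot i a).
Let u (t : nat) : T := nth x [:: y1; y2; x] t.
Let b : seq bool := [seq e x (w a) | a <- iota 0 5].

Lemma S23_nbrP (y : T) : S23 e v i y -> forall a, a < 5 -> e y (w a) = S23_nbr a.
Proof.
rewrite S23_rot => /andP [_ /allP nbr] a a_lt.
by apply/eqP/nbr; rewrite mem_iota.
Qed.

(* x is not on C: a vertex of C sees y1 and y2 alike, while x does not. *)
Lemma x_outside : ~~ inC v x.
Proof.
apply/existsP => [[j /eqP vj]].
have [a a_lt ja] := rot_surj i j.
move: xy1 xy2; rewrite -vj ja !(sym (v _)) -/(w a) !S23_nbrP //.
by move=> ->.
Qed.

Lemma nth_b a : a < 5 -> nth false b a = e x (w a).
Proof. by move=> a_lt; rewrite (nth_map 0) ?size_iota // nth_iota. Qed.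

Lemma b_admissible : admissible b.
Proof.
have b_in a : a \in iota 0 5 -> nth false b a = e x (w a).
  by rewrite mem_iota => /= /nth_b.
have eq_nbr (P : nat -> bool) :
  all (fun a => nth false b a == P a) (iota 0 5) = all (fun a => e x (w a) == P a) (iota 0 5).
  by apply: eq_in_all => a /b_in ->.
have eq_full : all (nth false b) (iota 0 5) = all (fun a => e x (w a)) (iota 0 5).
  exact: eq_in_all.
rewrite /admissible !eq_nbr eq_full.
by move: n23 n4 n5; rewrite S23_rot S4_rot (S5_rot _ _ i) x_outside /= => -> -> ->.
Qed.

Lemma outer_inj : {in [pred t | t < 3] &, injective u}.
Proof.
have y1y2 : y1 != y2 by apply: contraNneq xy2 => <-.
have y1x : y1 != x by apply: contraTneq xy1 => ->; rewrite irr.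
have y2x : y2 != x by apply: contraNneq n23 => <-.
have uniq_u : uniq [:: y1; y2; x] by rewrite /= !inE negb_or y1y2 y1x y2x.
by move=> s t s_lt t_lt /eqP; rewrite /u nth_uniq // => /eqP.
Qed.

Lemma outer_outside t : t < 3 -> ~~ inC v (u t).
Proof.
by case: t => [|[|[|]]] // _; [case/andP: Sy1 | case/andP: Sy2 | exact: x_outside].
Qed.

Lemma outer_nbrE t p : t < 3 -> p < 5 -> e (u t) (w p) = outer_nbr b t p.
Proof.
case: t => [|[|[|]]] // _ p_lt.
- exact: S23_nbrP.
- exact: S23_nbrP.
- by rewrite /outer_nbr nth_b.
Qed.

Lemma outer_adjE s t : s < 3 -> t < 3 -> e (u s) (u t) = outer_adj (e y1 y2) s t.
Proof.
by case: s => [|[|[|]]] //; case: t => [|[|[|]]] //= _ _;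
  rewrite ?irr // ?(sym y1) ?(sym y2) ?(negbTE xy2).
Qed.

Lemma mixed_pair_copy : induced_copy e P5 \/ induced_copy e chair.
Proof.
have injw := rot_inj (i := i) C5.1.
have disj p t : p < 5 -> t < 3 -> w p != u t.
  by move=> _ t_lt; apply/outside_C/outer_outside.
have eC p q : p < 5 -> q < 5 -> e (w p) (w q) = cyc5 p q by rewrite /w rot_cycle.
have injW := glue_map_inj injw outer_inj disj.
have eW := glue_mapE sym eC outer_nbrE outer_adjE.
have size_b : size b = 5 by rewrite size_map size_iota.
have := config_has_P5_or_chair (e y1 y2) size_b b_admissible.
by case/orP => /(find_copy_lift injW eW); [left | right].
Qed.
End MixedPair.

Theorem mainTheorem7 (T : finType) (e : rel T) (v : 'I_5 -> T) :
  simple_graph e ->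
  vertex_critical e 5 ->
  H_free e P5 -> H_free e chair ->
  induced_C5 e v ->
  forall (i : 'I_5) (x : T),
    ~~ S23 e v i x -> ~~ S4 e v i x -> ~~ S5 e v x ->
    (forall y, S23 e v i y -> e x y) \/ (forall y, S23 e v i y -> ~~ e x y).
Proof.
move=> [sym irr] _ P5_free chair_free C5 i x n23 n4 n5.
have [all_adj | ] := boolP [forall y, S23 e v i y ==> e x y].
  by left=> y; apply/implyP; move/forallP: all_adj.
case/forallPn=> y2; rewrite negb_imply => /andP [Sy2 xy2].
have [no_adj | ] := boolP [forall y, S23 e v i y ==> ~~ e x y].
  by right=> y; apply/implyP; move/forallP: no_adj.
case/forallPn=> y1; rewrite negb_imply negbK => /andP [Sy1 xy1].
exfalso; have [] := mixed_pair_copy sym irr C5 Sy1 Sy2 xy1 xy2 n23 n4 n5.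
- exact: P5_free.
- exact: chair_free.
Qed.
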